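(* Fix $\gamma \geq 1$. Let $A(u,v) = (u,u+v)$, $\mathbf{1} = (1,1)$, $\mathbf{c} = (\gamma,1)$, and define $T:\mathbb{R}^2\to\mathbb{R}^2$ by $$T\mathbf{x} = \begin{cases} A\mathbf{x} + \mathbf{1}, & \langle \mathbf{c},\mathbf{x}\rangle \leq -1/2,\\ A\mathbf{x}, & |\langle \mathbf{c},\mathbf{x}\rangle| < 1/2,\\ A\mathbf{x} - \mathbf{1}, & \langle \mathbf{c},\mathbf{x}\rangle \geq 1/2.\end{cases}$$ Let $V:\mathbb{R}^2\to\mathbb{R}$ be the convex function $V(u,v) = u^2 + |2v - u|$, and let $R = R_1\cup R_2$ with $$R_1 = \{(u,v) : \gamma u + v \geq 0,\ 2v + u \leq 1,\ u \leq 1/2\},\qquad R_2 = \{(u,v) : \gamma u + v < 0,\ 2v + u \geq -1,\ u \geq -1/2\}.$$ If $\mathbf{x}\in\mathbb{R}^2$ satisfies $V(T\mathbf{x}) - V(\mathbf{x}) > 0$, then $\mathbf{x} \in R$. Moreover, $R \subseteq S$, where $S = S^+\cup S^-$ with $S^+ = \{(u,v) : -1/2 \leq \gamma u + v \leq 1/2 + \gamma,\ 0 \leq u < 1\}$ and $S^- = \{(u,v) : -(1/2+\gamma) \leq \gamma u + v \leq 1/2,\ -1 \leq u < 0\}$.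
   Context: $\langle\cdot,\cdot\rangle$ is the standard inner product on $\mathbb{R}^2$. *)

From Stdlib Require Import Reals Lra.
Open Scope R_scope.

Definition pt := (R * R)%type.

Definition inner (x y : pt) : R := fst x * fst y + snd x * snd y.

Definition Amap (x : pt) : pt := (fst x, fst x + snd x).

Definition one2 : pt := (1, 1).
Definition cvec (gamma : R) : pt := (gamma, 1).

Definition padd (x y : pt) : pt := (fst x + fst y, snd x + snd y).
Definition psub (x y : pt) : pt := (fst x - fst y, snd x - snd y).

Definition Tmap (gamma : R) (x : pt) : pt :=
  let s := inner (cvec gamma) x in
  if Rle_dec s (-(1/2)) then padd (Amap x) one2
  else if Rlt_dec (Rabs s) (1/2) then Amap x
  else psub (Amap x) one2.

Definition Vfun (x : pt) : R := fst x ^ 2 + Rabs (2 * snd x - fst x).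

Definition R1 (gamma : R) (x : pt) : Prop :=
  let (u, v) := x in gamma * u + v >= 0 /\ 2 * v + u <= 1 /\ u <= 1/2.
Definition R2 (gamma : R) (x : pt) : Prop :=
  let (u, v) := x in gamma * u + v < 0 /\ 2 * v + u >= -1 /\ u >= -(1/2).
Definition Rregion (gamma : R) (x : pt) : Prop := R1 gamma x \/ R2 gamma x.

Definition Splus (gamma : R) (x : pt) : Prop :=
  let (u, v) := x in
  -(1/2) <= gamma * u + v <= 1/2 + gamma /\ 0 <= u < 1.
Definition Sminus (gamma : R) (x : pt) : Prop :=
  let (u, v) := x in
  -(1/2 + gamma) <= gamma * u + v <= 1/2 /\ -1 <= u < 0.
Definition Sregion (gamma : R) (x : pt) : Prop := Splus gamma x \/ Sminus gamma x.

(* Write s = gamma u + v and V(u,v) = u^2 + |2v - u|.  Where |s| < 1/2 the map is the shear A,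
   and V(Ax) - V(x) = |u + 2v| - |2v - u| has the sign of u v; together with |s| < 1/2 and
   gamma >= 1 this puts x in R1 (u, v > 0) or R2 (u, v < 0).  Where s <= -1/2,
   V(Ax + 1) - V(x) = 2u + 1 + |u + 2v + 1| - |2v - u|, which the triangle inequality makes
   nonpositive unless u >= -1/2 and 2v + u >= -1, i.e. unless x is in R2; the case s >= 1/2
   is symmetric. *)
From Pilot Require Import Defs.
From Stdlib Require Import Reals Lra Psatz.
Open Scope R_scope.

Lemma Vfun_shift_up_increase (u v : R) :
  Vfun (padd (Amap (u, v)) one2) - Vfun (u, v) > 0 -> -(1/2) <= u /\ -1 <= 2 * v + u.
Proof. unfold Vfun, padd, Amap, one2; simpl; intros H; split_Rabs; nra. Qed.

Lemma Vfun_shift_down_increase (u v : R) :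
  Vfun (psub (Amap (u, v)) one2) - Vfun (u, v) > 0 -> u <= 1/2 /\ 2 * v + u <= 1.
Proof. unfold Vfun, psub, Amap, one2; simpl; intros H; split_Rabs; nra. Qed.

(* (u + 2v)^2 - (2v - u)^2 = 8 u v *)
Lemma Vfun_Amap_increase (u v : R) :
  Vfun (Amap (u, v)) - Vfun (u, v) > 0 -> 0 < u * v.
Proof. unfold Vfun, Amap; simpl; intros H; split_Rabs; nra. Qed.

Lemma Rregion_of_same_sign (gamma u v : R) : 1 <= gamma ->
  0 < u * v -> Rabs (gamma * u + v) < 1/2 -> Rregion gamma (u, v).
Proof.
  intros hgamma huv hs; apply Rabs_def2 in hs as [hs_lt hs_gt].
  destruct (Rlt_or_le 0 u) as [hu | hu].
  - assert (hv : 0 < v) by nra.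
    left; repeat split; nra.
  - assert (hu' : u < 0) by (destruct hu as [hu | ->]; nra).
    assert (hv : v < 0) by nra.
    right; repeat split; nra.
Qed.

Lemma Vfun_Tmap_increase_in_Rregion (gamma : R) (x : pt) : 1 <= gamma ->
  Vfun (Tmap gamma x) - Vfun x > 0 -> Rregion gamma x.
Proof.
  destruct x as [u v]; intros hgamma H.
  unfold Tmap, inner, cvec in H; simpl in H; rewrite Rmult_1_l in H.
  destruct (Rle_dec (gamma * u + v) (-(1/2))) as [hs | hs].
  - apply Vfun_shift_up_increase in H as [hu hv].
    right; repeat split; lra.
  - destruct (Rlt_dec (Rabs (gamma * u + v)) (1/2)) as [hs' | hs'].
    + exact (Rregion_of_same_sign gamma u v hgamma (Vfun_Amap_increase u v H) hs').
    + apply Vfun_shift_down_increase in H as [hu hv].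
      assert (hs_ge : gamma * u + v >= 1/2) by (split_Rabs; lra).
      left; repeat split; lra.
Qed.

Lemma R1_sub_Sregion (gamma : R) (x : pt) : 1 <= gamma -> Defs.R1 gamma x -> Sregion gamma x.
Proof.
  destruct x as [u v]; intros hgamma [hs [hv hu]].
  destruct (Rle_or_lt 0 u); [left | right]; repeat split; nra.
Qed.

Lemma R2_sub_Sregion (gamma : R) (x : pt) : 1 <= gamma -> R2 gamma x -> Sregion gamma x.
Proof.
  destruct x as [u v]; intros hgamma [hs [hv hu]].
  destruct (Rle_or_lt 0 u); [left | right]; repeat split; nra.
Qed.

Theorem proposition5 (gamma : R) (hgamma : 1 <= gamma) :
  (forall x : pt, Vfun (Tmap gamma x) - Vfun x > 0 -> Rregion gamma x) /\
  (forall x : pt, Rregion gamma x -> Sregion gamma x).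
Proof.
  split.
  - intros x; exact (Vfun_Tmap_increase_in_Rregion gamma x hgamma).
  - intros x [hR1 | hR2].
    + exact (R1_sub_Sregion gamma x hgamma hR1).
    + exact (R2_sub_Sregion gamma x hgamma hR2).
Qed.
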